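(* Let $\mathcal P$ be a Poisson algebra over $\mathbb R$ (a commutative associative unital $\mathbb R$-algebra with an antisymmetric bilinear bracket $\{\cdot,\cdot\}_p$ satisfying the Jacobi identity and the Leibniz rule $\{X,YZ\}_p=\{X,Y\}_pZ+\{X,Z\}_pY$) which is an integral domain. Fix an integer $M\ge 1$ and put $L=\lfloor M/2\rfloor$. Let $A,B\in\mathcal P$ be algebraically independent over $\mathbb R$ (no nonzero real polynomial $P(x,y)$ satisfies $P(A,B)=0$), put $C=\{A,B\}_p$ and assume $C\neq 0$. Suppose there are real constants $\alpha_1,\dots,\alpha_{L+1},\delta,\epsilon,\beta,\lambda_1,\dots,\lambda_M,\rho,\eta,\omega_1,\dots,\omega_L,\zeta$ with $$\{A,C\}_p=\sum_{i=1}^{L+1}\alpha_iA^i+\delta B+\epsilon+2\beta AB,\qquad \{B,C\}_p=\sum_{i=1}^{M}\lambda_iA^i+\rho B^2+\eta B+\sum_{i=1}^{L}2\omega_iA^iB+\zeta .$$ Then $\eta=-\alpha_1$, $\rho=-\beta$ and $2\omega_i=-(i+1)\alpha_{i+1}$ for $i=1,\dots,L$. Consequently $$\{B,C\}_p=\sum_{i=1}^{M}\lambda_iA^i-\beta B^2-\alpha_1B-\sum_{i=1}^{L}(i+1)\alpha_{i+1}A^iB+\zeta .$$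
   Context: $\lfloor y\rfloor$ denotes the integer part of $y$, so $\lfloor M/2+1\rfloor=L+1$. A typical example of such $\mathcal P$ is the polynomial algebra $\mathbb R[q_1,q_2,p_1,p_2]$ with the canonical bracket $\{X,Y\}_p=\sum_{i=1}^2\left(\frac{\partial X}{\partial q_i}\frac{\partial Y}{\partial p_i}-\frac{\partial X}{\partial p_i}\frac{\partial Y}{\partial q_i}\right)$, with $A$ of degree 2 and $B$ of degree $M$ in the momenta. *)

From HB Require Import structures.
From Stdlib Require Import Reals ClassicalEpsilon.
From mathcomp Require Import all_boot all_order all_algebra.
Set Implicit Arguments. Unset Strict Implicit. Unset Printing Implicit Defensive.
Import GRing.Theory.

Definition R_eqb (x y : R) : bool := if Req_EM_T x y then true else false.
Lemma R_eqP : Equality.axiom R_eqb.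
Proof. by move=> x y; rewrite /R_eqb; case: Req_EM_T => h; constructor. Qed.
HB.instance Definition _ := hasDecEq.Build R R_eqP.

Definition R_find (P : pred R) (n : nat) : option R :=
  match excluded_middle_informative (exists x, P x) with
  | left h => Some (proj1_sig (constructive_indefinite_description _ h))
  | right _ => None
  end.
Lemma R_find_correct P n x : R_find P n = Some x -> P x.
Proof.
rewrite /R_find; case: excluded_middle_informative => // h [<-].
exact: proj2_sig (constructive_indefinite_description _ h).
Qed.
Lemma R_find_complete (P : pred R) : (exists x, P x) -> exists n, R_find P n.
Proof. by move=> h; exists 0%N; rewrite /R_find; case: excluded_middle_informative. Qed.
Lemma R_find_ext (P Q : pred R) : P =1 Q -> R_find P =1 R_find Q.
Proof.
move=> /(_ _)/eqP hPQ; have -> : P = Q.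
  by apply: FunctionalExtensionality.functional_extensionality => x; apply/eqP.
by [].
Qed.
HB.instance Definition _ := hasChoice.Build R R_find_correct R_find_complete R_find_ext.

Lemma R_addA : associative Rplus. Proof. by move=> *; rewrite Rplus_assoc. Qed.
Lemma R_addC : commutative Rplus. Proof. exact: Rplus_comm. Qed.
Lemma R_add0 : left_id R0 Rplus. Proof. exact: Rplus_0_l. Qed.
Lemma R_addN : left_inverse R0 Ropp Rplus. Proof. exact: Rplus_opp_l. Qed.
HB.instance Definition _ := GRing.isZmodule.Build R R_addA R_addC R_add0 R_addN.

Lemma R_mulA : associative Rmult. Proof. by move=> *; rewrite Rmult_assoc. Qed.
Lemma R_mulC : commutative Rmult. Proof. exact: Rmult_comm. Qed.
Lemma R_mul1 : left_id R1 Rmult. Proof. exact: Rmult_1_l. Qed.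
Lemma R_mulDl : left_distributive Rmult Rplus. Proof. exact: Rmult_plus_distr_r. Qed.
Lemma R_one_neq0 : R1 != R0. Proof. by apply/eqP; exact: R1_neq_R0. Qed.
HB.instance Definition _ :=
  GRing.Zmodule_isComNzRing.Build R R_mulA R_mulC R_mul1 R_mulDl R_one_neq0.

Local Open Scope ring_scope.

Definition is_poisson_bracket (P : comAlgType R) (br : P -> P -> P) : Prop :=
  [/\ (forall (a : R) (x y z : P), br (a *: x + y) z = a *: br x z + br y z),
      (forall (a : R) (x y z : P), br x (a *: y + z) = a *: br x y + br x z),
      (forall x y : P, br x y = - br y x),
      (forall x y z : P, br x (br y z) + br y (br z x) + br z (br x y) = 0)
    & (forall x y z : P, br x (y * z) = br x y * z + br x z * y)].

(* P is an integral domain (P is nontrivial since comAlgType requires 1 != 0). *)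
Definition is_integral_domain (P : comAlgType R) : Prop :=
  forall x y : P, x * y = 0 -> x = 0 \/ y = 0.

Definition alg_indep (P : comAlgType R) (A B : P) : Prop :=
  forall (n : nat) (c : nat -> nat -> R),
    \sum_(i < n) \sum_(j < n) c i j *: (A ^+ i * B ^+ j) = 0 ->
    forall i j, (i < n)%N -> (j < n)%N -> c i j = 0.

(* Jacobi's identity applied to A, B and C
   gives {A,{B,C}} = {B,{A,C}}.  Both sides can be computed from the two
   hypotheses with the derivation rules of the bracket: for polynomials in A
   one has {A, p(A)} = 0 and {B, p(A)} = -p'(A) C, so that
     {A,{B,C}} = C (2 rho B + eta + sum_i 2 omega_i A^i),
     {B,{A,C}} = -C (alpha_1 + sum_i (i+1) alpha_(i+1) A^i + 2 beta B).
   Their difference is C * Q with Q = (eta + alpha_1) + 2 (rho + beta) B +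
   sum_i (2 omega_i + (i+1) alpha_(i+1)) A^i.  Since C <> 0 in an integral
   domain, Q = 0, and algebraic independence of A and B forces every
   coefficient of Q to vanish, which are exactly the claimed relations. *)

From Stdlib Require Import Reals Lra.
From mathcomp Require Import all_boot all_algebra.
From mathcomp Require Import ring.
Import GRing.Theory.
Set Implicit Arguments.
Unset Strict Implicit.

Local Open Scope ring_scope.

Lemma R_half_add_half : (Rinv 2 + Rinv 2 : R) = 1.
Proof. change (Rplus (Rinv 2) (Rinv 2) = R1); lra. Qed.

Lemma R_double_add_eq0 (x y : R) : 2 * x + 2 * y = 0 -> x = - y.
Proof. change (Rplus (Rmult 2 x) (Rmult 2 y) = R0 -> x = Ropp y); lra. Qed.

Section PoissonCalculus.
Variables (P : comAlgType R) (br : P -> P -> P).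
Hypothesis Hbr : is_poisson_bracket br.

Lemma br_antisym x y : br x y = - br y x.
Proof. by case: Hbr. Qed.

Lemma br_mulr x y z : br x (y * z) = br x y * z + br x z * y.
Proof. by case: Hbr. Qed.

Lemma br_addr x y z : br x (y + z) = br x y + br x z.
Proof. by case: Hbr => _ lin _ _ _; have := lin 1 x y z; rewrite !scale1r. Qed.

Lemma br_0r x : br x 0 = 0.
Proof.
have h := br_addr x 0 0; rewrite addr0 in h.
by apply: (addIr (br x 0)); rewrite add0r -h.
Qed.

Lemma br_scaler a x y : br x (a *: y) = a *: br x y.
Proof.
by case: Hbr => _ lin _ _ _; have := lin a x y 0; rewrite !addr0 br_0r addr0.
Qed.

Lemma br_sumr x I (r : seq I) (Pr : pred I) (F : I -> P) :
  br x (\sum_(i <- r | Pr i) F i) = \sum_(i <- r | Pr i) br x (F i).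
Proof. exact: (big_morph _ (br_addr x) (br_0r x)). Qed.

(* Antisymmetry in characteristic 0 kills the diagonal. *)
Lemma br_xx x : br x x = 0.
Proof.
have dbl : br x x + br x x = 0 by rewrite {1}br_antisym addNr.
by rewrite -[br x x]scale1r -R_half_add_half scalerDl -scalerDr dbl scaler0.
Qed.

Lemma br_1r x : br x 1 = 0.
Proof.
have h := br_mulr x 1 1; rewrite !mulr1 in h.
by apply: (addIr (br x 1)); rewrite add0r -h.
Qed.

Lemma br_algr x a : br x a%:A = 0.
Proof. by rewrite br_scaler br_1r scaler0. Qed.

Lemma br_exprSr y x n : br y (x ^+ n.+1) = (x ^+ n * br y x) *+ n.+1.
Proof.
elim: n => [|n IH]; first by rewrite expr1 expr0 mul1r.
by rewrite exprSr br_mulr IH exprS; ring.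
Qed.

Lemma br_expr_self x n : br x (x ^+ n) = 0.
Proof. by case: n => [|n]; rewrite ?expr0 ?br_1r // br_exprSr br_xx mulr0 mul0rn. Qed.

Lemma br_jacobi_swap x y : br x (br y (br x y)) = br y (br x (br x y)).
Proof.
case: Hbr => _ _ _ jac _; have := jac x y (br x y).
rewrite br_xx addr0 (br_antisym _ x) -scaleN1r br_scaler scaleN1r.
by move=> /eqP; rewrite subr_eq0 => /eqP.
Qed.

Variables (A B : P).
Local Notation C := (br A B).

Lemma br_poly_in_A n (a : nat -> R) :
  br B (\sum_(1 <= i < n.+1) a i *: A ^+ i)
  = - \sum_(0 <= i < n) (i.+1%:R * a i.+1) *: (C * A ^+ i).
Proof.
rewrite br_sumr big_add1 -sumrN; apply: eq_bigr => i _.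
rewrite br_scaler br_exprSr (br_antisym B) -scaler_nat scalerA mulrC.
by rewrite mulrN scalerN [A ^+ i * _]mulrC.
Qed.

Lemma br_A_of_BC m n (lambda w : nat -> R) (rho eta zeta : R) :
  br A (\sum_(1 <= i < m) lambda i *: A ^+ i + rho *: B ^+ 2 + eta *: B
        + \sum_(1 <= i < n) w i *: (A ^+ i * B) + zeta%:A)
  = (2 * rho) *: (C * B) + eta *: C + \sum_(1 <= i < n) w i *: (C * A ^+ i).
Proof.
rewrite !br_addr !br_sumr br_algr addr0 big1 => [|i _]; last first.
  by rewrite br_scaler br_expr_self scaler0.
rewrite add0r !br_scaler expr2 br_mulr; congr (_ + _ + _).
  by rewrite -mulr2n -scaler_nat scalerA mulrC.
by apply: eq_bigr => i _; rewrite br_scaler br_mulr br_expr_self mul0r add0r.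
Qed.

Lemma br_B_of_AC n (alpha : nat -> R) (delta eps gamma : R) :
  br B (\sum_(1 <= i < n.+2) alpha i *: A ^+ i + delta *: B + eps%:A
        + gamma *: (A * B))
  = - (alpha 1%N *: C) - \sum_(1 <= i < n.+1) (i.+1%:R * alpha i.+1) *: (C * A ^+ i)
    - gamma *: (C * B).
Proof.
rewrite !br_addr br_poly_in_A br_algr addr0 !br_scaler br_xx scaler0 addr0.
rewrite br_mulr br_xx mul0r addr0 (br_antisym B A) big_nat_recl //.
by rewrite expr0 mulr1 mulr1n mul1r big_add1 opprD mulNr scalerN.
Qed.

End PoissonCalculus.

Lemma alg_indep_coef (P : comAlgType R) (A B : P) (Hind : alg_indep A B)
    n (c0 b : R) (a : nat -> R) :
  c0%:A + b *: B + \sum_(1 <= i < n) a i *: A ^+ i = 0 ->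
  [/\ c0 = 0, b = 0 & forall i, (1 <= i < n)%N -> a i = 0].
Proof.
move=> Q0.
pose c i j : R := if j == 0%N then (if i == 0%N then c0 else if (i < n)%N then a i else 0)
                  else if (j == 1%N) && (i == 0%N) then b else 0.
have row i : \sum_(j < n.+2) c i j *: (A ^+ i * B ^+ j)
             = c i 0%N *: A ^+ i + c i 1%N *: (A ^+ i * B).
  rewrite !big_ord_recl big1 ?addr0 ?expr0 ?mulr1 ?expr1 // => j _.
  by rewrite /c scale0r.
have col1 : \sum_(i < n.+2) c i 1%N *: (A ^+ i * B) = b *: B.
  rewrite big_ord_recl big1 ?addr0 ?expr0 ?mul1r // => i _.
  by rewrite /c scale0r.
have col0 : \sum_(i < n.+2) c i 0%N *: A ^+ i
            = c0%:A + \sum_(1 <= i < n) a i *: A ^+ i.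
  rewrite big_ord_recl expr0 [in RHS](big_nat_widen _ _ n.+2) ?leqW //.
  rewrite [in RHS]big_mkcond big_add1 big_mkord; congr (_ + _).
  by apply: eq_bigr => i _; rewrite lift0 /c /=; case: ifP; rewrite ?scale0r.
have c_eq0 : forall i j, (i < n.+2)%N -> (j < n.+2)%N -> c i j = 0.
  apply: Hind; under eq_bigr => i _ do rewrite row.
  by rewrite big_split /= col0 col1 addrAC.
split; first exact: c_eq0 0%N 0%N isT isT.
  exact: c_eq0 0%N 1%N isT isT.
move=> i /andP[i_gt0 i_lt_n]; have := c_eq0 i 0%N (leqW (leqW i_lt_n)) isT.
by rewrite /c /= (negbTE (lt0n_neq0 i_gt0)) i_lt_n.
Qed.

Unset Implicit Arguments.

Theorem proposition1 (P : comAlgType R) (br : P -> P -> P)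
  (Hbr : is_poisson_bracket br) (Hdom : is_integral_domain P)
  (M : nat) (HM : (1 <= M)%N)
  (A B : P) (Hind : alg_indep A B) (HC : br A B != 0)
  (alpha lambda omega : nat -> R) (delta eps beta rho eta zeta : R)
  (HAC : br A (br A B) =
         \sum_(1 <= i < (M./2).+2) alpha i *: A ^+ i + delta *: B + eps%:A
         + (2 * beta) *: (A * B))
  (HBC : br B (br A B) =
         \sum_(1 <= i < M.+1) lambda i *: A ^+ i + rho *: B ^+ 2 + eta *: B
         + \sum_(1 <= i < (M./2).+1) (2 * omega i) *: (A ^+ i * B) + zeta%:A) :
  [/\ eta = - alpha 1%N,
      rho = - beta,
      (forall i : nat, (1 <= i <= M./2)%N -> 2 * omega i = - (i.+1%:R * alpha i.+1))
    & br B (br A B) =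
        \sum_(1 <= i < M.+1) lambda i *: A ^+ i - beta *: B ^+ 2 - alpha 1%N *: B
        - \sum_(1 <= i < (M./2).+1) (i.+1%:R * alpha i.+1) *: (A ^+ i * B) + zeta%:A].
Proof.
set L := M./2; set C := br A B.
set Q := (eta + alpha 1%N)%:A + (2 * rho + 2 * beta) *: B
  + \sum_(1 <= i < L.+1) (2 * omega i + i.+1%:R * alpha i.+1) *: A ^+ i.
(* Jacobi: 0 = {A,{B,C}} - {B,{A,C}} = C * Q. *)
have CQ0 : C * Q = 0.
  have := br_jacobi_swap Hbr A B; rewrite -/C => /eqP; rewrite -subr_eq0 => /eqP.
  rewrite {1}HBC HAC br_A_of_BC // br_B_of_AC // => <-.
  rewrite !mulrDr mulr_algr -scalerAr mulr_sumr.
  under eq_bigr => i _ do rewrite -scalerAr scalerDl.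
  by rewrite !scalerDl big_split /=; ring.
have Q0 : Q = 0.
  by case: (Hdom _ _ CQ0) => // C0; move: HC; rewrite -/C C0 eqxx.
have [eta_alpha rho_beta coef_eq0] := alg_indep_coef Hind Q0.
have eta_eq : eta = - alpha 1%N by apply/eqP; rewrite -addr_eq0 eta_alpha.
have rho_eq : rho = - beta by exact: R_double_add_eq0.
have omega_eq i : (1 <= i <= L)%N -> 2 * omega i = - (i.+1%:R * alpha i.+1).
  by move=> iL; apply/eqP; rewrite -addr_eq0 coef_eq0.
split=> //; rewrite HBC eta_eq rho_eq.
under [\sum_(1 <= i < L.+1) _]eq_big_nat => i /omega_eq-> do rewrite scaleNr.
by rewrite sumrN !scaleNr.
Qed.
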